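(* Let $D=(D_1,D_2)\in\mathcal{U}(n,s_1\cdots s_p s_{p+1}\cdots s_{p+q})$ be a U-type design whose first $p$ factors are qualitative and last $q$ factors are quantitative, with rows $x_i=(x_{i1},\dots,x_{i,p+q})$, $i=1,\dots,n$, where the quantitative entries are the transformed values in $[0,1]$. Then the squared qualitative-quantitative discrepancy of $D$ equals $$\mathrm{QQD}^2(D)=C+\frac{1}{n^2}\sum_{i,j=1}^{n}\left(\frac{5}{4}\right)^p\left(\frac{6}{5}\right)^{\delta_{ij}(D_1)}\prod_{k=p+1}^{p+q}\left(\frac{3}{2}-|x_{ik}-x_{jk}|+|x_{ik}-x_{jk}|^2\right),$$ where $C=-\prod_{k=1}^{p}\left(\frac{5s_k+1}{4s_k}\right)\left(\frac{4}{3}\right)^q$ and $\delta_{ij}(D_1)$ is the number of coordinates $k\in\{1,\dots,p\}$ with $x_{ik}=x_{jk}$ (the coincidence number of rows $i$ and $j$ of $D_1$).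
   Context: A U-type design in $\mathcal{U}(n,s_1\cdots s_{p+q})$ is an $n\times(p+q)$ matrix whose $k$th column takes each value in $\{0,1,\dots,s_k-1\}$ equally often. The first $p$ columns ($D_1$) are qualitative factors, the last $q$ columns ($D_2$) quantitative. For the quantitative columns ($k=p+1,\dots,p+q$) a level $x\in\{0,\dots,s_k-1\}$ is transformed to $(2x+1)/(2s_k)\in[0,1]$, and $x_{ik}$ denotes this transformed value. Let $\chi=\chi_1\times\cdots\times\chi_{p+q}$ with $\chi_k=\{0,\dots,s_k-1\}$ for $k\le p$ and $\chi_k=[0,1]$ for $k>p$, and let $F$ be the uniform distribution on $\chi$ (product of discrete uniform distributions on the $\chi_k$, $k\le p$, and Lebesgue measure on $[0,1]$ for $k>p$). Define the kernel $\mathcal{K}(t,z)=\prod_{k=1}^{p+q}\mathcal{K}_k(t_k,z_k)$, where $\mathcal{K}_k(t_k,z_k)=(3/2)^{\delta_{t_kz_k}}(5/4)^{1-\delta_{t_kz_k}}$ for $k\le p$ ($\delta_{tz}=1$ if $t=z$ and $0$ otherwise) and $\mathcal{K}_k(t_k,z_k)=\frac32-|t_k-z_k|+|t_k-z_k|^2$ for $k>p$. The squared qualitative-quantitative discrepancy (QQD) of $D$ with rows $x_1,\dots,x_n$ is $$\mathrm{QQD}^2(D)=\int_{\chi^2}\mathcal{K}(t,z)\,dF(t)\,dF(z)-\frac{2}{n}\sum_{i=1}^n\int_\chi\mathcal{K}(t,x_i)\,dF(t)+\frac{1}{n^2}\sum_{i,j=1}^n\mathcal{K}(x_i,x_j).$$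 *)

From HB Require Import structures.
From mathcomp Require Import all_boot all_order all_algebra.
From mathcomp Require Import all_classical all_reals all_analysis.
Set Implicit Arguments. Unset Strict Implicit. Unset Printing Implicit Defensive.
Import Order.TTheory GRing.Theory Num.Theory.
Local Open Scope ring_scope.
Local Open Scope classical_set_scope.

Section QQD.
Variable R : realType.

Definition utype (n m : nat) (s : 'I_m -> nat) (D : 'I_n -> 'I_m -> nat) : Prop :=
  forall k : 'I_m,
    (forall i, (D i k < s k)%N) /\
    (forall v w, (v < s k)%N -> (w < s k)%N ->
       #|[set i | D i k == v]| = #|[set i | D i k == w]|).

Definition transf (s x : nat) : R := (2 * x + 1)%:R / (2 * s)%:R.

(* integral against the discrete uniform distribution on
   chi_1 x ... x chi_p, chi_k = {0,...,s k - 1} *)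
Definition dint (p : nat) (s : 'I_p -> nat) (f : ('I_p -> nat) -> R) : R :=
  (\prod_(k < p) (s k)%:R)^-1 *
  \sum_(t : {dffun forall k : 'I_p, 'I_(s k)}) f (fun k => nat_of_ord (t k)).

Definition ocons (q : nat) (x : R) (u : 'I_q -> R) : 'I_q.+1 -> R :=
  fun i => match unlift ord0 i with Some j => u j | None => x end.

(* integral against Lebesgue measure on [0,1]^q (iterated integrals) *)
Fixpoint cint (q : nat) : (('I_q -> R) -> R) -> R :=
  match q with
  | 0 => fun f => f (fun _ => 0)
  | q'.+1 => fun f =>
      Rintegral (@lebesgue_measure R) `[0%R, 1%R]
        (fun x => cint (fun u => f (ocons x u)))
  end.

Definition chiint (p q : nat) (s : 'I_p -> nat)
  (f : ('I_p -> nat) -> ('I_q -> R) -> R) : R :=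
  dint s (fun t => cint (fun u => f t u)).

Definition Kqual (p : nat) (t z : 'I_p -> nat) : R :=
  \prod_(k < p) (if t k == z k then 3 / 2 else 5 / 4).
Definition Kquan (q : nat) (t z : 'I_q -> R) : R :=
  \prod_(k < q) (3 / 2 - `|t k - z k| + `|t k - z k| ^+ 2).
Definition Kern (p q : nat) (t1 : 'I_p -> nat) (t2 : 'I_q -> R)
  (z1 : 'I_p -> nat) (z2 : 'I_q -> R) : R := Kqual t1 z1 * Kquan t2 z2.

(* squared QQD of D = (D1, D2); D2 holds the levels of the quantitative
   factors, transformed by transf. *)
Definition QQD2 (n p q : nat) (s1 : 'I_p -> nat) (s2 : 'I_q -> nat)
  (D1 : 'I_n -> 'I_p -> nat) (D2 : 'I_n -> 'I_q -> nat) : R :=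
  let x2 := fun i k => transf (s2 k) (D2 i k) in
  chiint s1 (fun t1 (t2 : 'I_q -> R) => chiint s1 (fun z1 (z2 : 'I_q -> R) => Kern t1 t2 z1 z2))
  - 2 / n%:R * \sum_(i < n) chiint s1 (fun t1 t2 => Kern t1 t2 (D1 i) (x2 i))
  + 1 / (n%:R ^+ 2) * \sum_(i < n) \sum_(j < n) Kern (D1 i) (x2 i) (D1 j) (x2 j).

Definition coinc (n p : nat) (D1 : 'I_n -> 'I_p -> nat) (i j : 'I_n) : nat :=
  #|[set k : 'I_p | D1 i k == D1 j k]|.

End QQD.

From HB Require Import structures.
From mathcomp Require Import all_boot all_order all_algebra.
From mathcomp Require Import all_classical all_reals all_analysis.
From mathcomp Require Import ring zify.
Set Implicit Arguments.
Unset Strict Implicit.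
Unset Printing Implicit Defensive.

Import Order.TTheory GRing.Theory Num.Theory numFieldNormedType.Exports.
Local Open Scope ring_scope.
Local Open Scope classical_set_scope.

(* Both the discrete mean of the qualitative kernel factor, (5 s + 1) / (4 s), and the
   Lebesgue mean of the quantitative one, 4 / 3, do not depend on the fixed point
   (for the latter: the antiderivative of 3/2 - |z - a| + |z - a|^2 over [0, 1] is
   a cubic in a whose non-constant terms cancel).  Hence z |-> int K(t, z) dF(t) is
   the constant C := prod_k (5 s_k + 1) / (4 s_k) * (4/3)^q, the first two terms of
   QQD^2 reduce to C - 2 C, and (3/2)^d (5/4)^(p-d) = (5/4)^p (6/5)^d rewrites the
   double sum. *)

Lemma sum_dffun_prod (R : comNzRingType) (I : finType) (T_ : I -> finType)
  (F : forall i, T_ i -> R) :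
  \sum_(t : {dffun forall i, T_ i}) \prod_i F i (t i) =
  \prod_i \sum_(j : T_ i) F i j.
Proof.
rewrite (reindex (@dffun_of_fprod I T_)); last exact/onW_bij/dffun_of_fprod_bij.
transitivity (\sum_(t : fprod T_) \prod_(i in I) [ffun j => F i j] (t i)).
  by apply: eq_bigr => t _; apply: eq_bigr => i _; rewrite /dffun_of_fprod !ffunE.
rewrite big_fprod -(bigA_distr_big_dep _ (fun i => untag 0 [ffun j => F i j])).
apply: eq_bigr => i _; rewrite -(big_tag (fun i j => [ffun j => F i j] j)).
by apply: eq_bigr => j _; rewrite ffunE.
Qed.

Lemma sum_ord_if_eq (R : nmodType) (m a : nat) (x y : R) : (a < m)%N ->
  \sum_(j < m) (if a == j then x else y) = x + y *+ m.-1.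
Proof.
move=> am; rewrite (bigD1_ord (Ordinal am)) //= eqxx.
rewrite (eq_bigr (fun _ => y)) ?sumr_const ?card_ord // => j _.
by rewrite ifF //; exact: negbTE (neq_lift (Ordinal am) j).
Qed.

Section KernelMeans.
Variable R : realType.
Notation mu := (@lebesgue_measure R).

Lemma Rintegral_deriv_horner (p : {poly R}) (x y : R) : x <= y ->
  \int[mu]_(z in `[x, y]) (deriv p).[z] = p.[y] - p.[x].
Proof.
rewrite le_eqVlt => /predU1P[<-|xy]; first by rewrite set_itv1 Rintegral_set1 subrr.
rewrite /Rintegral (@continuous_FTC2 _ _ (horner p)) //.
- by apply: derivable_within_continuous => z _; exact: derivable_horner.
- split.
  + by move=> z _; exact: derivable_horner.
  + by apply: cvg_at_right_filter; exact: continuous_horner.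
  + by apply: cvg_at_left_filter; exact: continuous_horner.
- by move=> z _; rewrite derive1E derive_val.
Qed.

Lemma Rintegral_itv_split (f : R -> R) (x y z : R) : x <= y -> y <= z ->
  mu.-integrable `[x, z] (EFin \o f) ->
  \int[mu]_(t in `[x, z]) f t =
  \int[mu]_(t in `[x, y]) f t + \int[mu]_(t in `[y, z]) f t.
Proof.
move=> xy yz fi.
have := @Rintegral_itvB R f (BLeft x) (BRight z) y fi.
rewrite !bnd_simp => /(_ xy yz) fxyz.
rewrite -(@Rintegral_itv_obnd_cbnd _ y) -?fxyz; first by rewrite addrC subrK.
by apply: integrableS fi => //; apply: subset_itvr; rewrite bnd_simp.
Qed.

Definition Kquan1 (x y : R) : R := 3 / 2 - `|x - y| + `|x - y| ^+ 2.

Lemma Kquan1C : commutative Kquan1.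
Proof. by move=> x y; rewrite /Kquan1 distrC. Qed.

Lemma continuous_Kquan1 (a : R) : continuous (Kquan1 a).
Proof.
move=> z; have dist_cvg : `|a - x| @[x --> z] --> `|a - z|.
  by apply: cvg_norm; apply: cvgB; [exact: cvg_cst | exact: cvg_id].
apply: cvgD; first by apply: cvgB; [exact: cvg_cst | exact: dist_cvg].
by under eq_fun do rewrite expr2; apply: cvgM.
Qed.

Lemma integrable_Kquan1 (a : R) : mu.-integrable `[0, 1] (EFin \o Kquan1 a).
Proof.
apply: continuous_compact_integrable; first exact: segment_compact.
exact/continuous_subspaceT/continuous_Kquan1.
Qed.

Lemma Rintegral_Kquan1 (a : R) : 0 <= a <= 1 ->
  \int[mu]_(z in `[0, 1]) Kquan1 a z = 4 / 3.
Proof.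
move=> /andP[a0 a1].
rewrite (Rintegral_itv_split a0 a1 (integrable_Kquan1 a)).
pose u : {poly R} := 'X - a%:P.
pose P1 : {poly R} := (3 / 2) *: 'X + (1 / 2) *: u ^+ 2 + (1 / 3) *: u ^+ 3.
pose P2 : {poly R} := (3 / 2) *: 'X - (1 / 2) *: u ^+ 2 + (1 / 3) *: u ^+ 3.
have -> : \int[mu]_(z in `[0, a]) Kquan1 a z = P1.[a] - P1.[0].
  rewrite -Rintegral_deriv_horner //; apply: eq_Rintegral => z.
  rewrite inE /= in_itv /= => /andP[_ za].
  rewrite /Kquan1 ger0_norm ?subr_ge0 // /P1 /u !poly.derivE !hornerE /=.
  by field.
have -> : \int[mu]_(z in `[a, 1]) Kquan1 a z = P2.[1] - P2.[a].
  rewrite -Rintegral_deriv_horner //; apply: eq_Rintegral => z.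
  rewrite inE /= in_itv /= => /andP[az _].
  rewrite /Kquan1 distrC ger0_norm ?subr_ge0 // /P2 /u !poly.derivE !hornerE /=.
  by field.
rewrite /P1 /P2 /u !hornerE /=.
by field.
Qed.

Lemma cint_ext q (f g : ('I_q -> R) -> R) :
  (forall u, (forall k, 0 <= u k <= 1) -> f u = g u) -> cint f = cint g.
Proof.
elim: q f g => [|q IHq] f g fg /=; first by apply: fg => -[].
apply: eq_Rintegral => x; rewrite inE /= in_itv /= => x01.
apply: IHq => u u01; apply: fg => k.
by rewrite /ocons; case: unliftP.
Qed.

Lemma cint_cst q (c : R) : cint (fun _ : 'I_q -> R => c) = c.
Proof.
elim: q => [|q IHq] //=; rewrite IHq Rintegral_cst //.
by rewrite [X in fine X]lebesgue_measure_itv /= lte01 oppr0 adde0 mulr1.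
Qed.

Lemma cint_prod q (g : 'I_q -> R -> R) (c : R) :
  (forall k, mu.-integrable `[0, 1] (EFin \o g k)) ->
  cint (fun u => c * \prod_k g k (u k)) =
  c * \prod_k \int[mu]_(x in `[0, 1]) g k x.
Proof.
elim: q g c => [|q IHq] g c gi /=; first by rewrite !big_ord0.
under eq_Rintegral => x _.
  have -> : (fun u => c * \prod_(k < q.+1) g k (ocons x u k)) =
      (fun u => c * g ord0 x * \prod_(k < q) g (lift ord0 k) (u k)).
    apply/funext => u; rewrite big_ord_recl /ocons unlift_none mulrA.
    by congr (_ * _); apply: eq_bigr => k _; rewrite liftK.
  rewrite (@IHq (fun k => g (lift ord0 k))); last by move=> k; exact: gi.
  over.
under eq_Rintegral do rewrite mulrAC.
by rewrite RintegralZl // big_ord_recl /=; ring.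
Qed.

Lemma cint_Kquan q (a : 'I_q -> R) (c : R) : (forall k, 0 <= a k <= 1) ->
  cint (fun u => c * Kquan a u) = c * (4 / 3) ^+ q.
Proof.
move=> a01; rewrite (@cint_prod _ (fun k => Kquan1 (a k))); last first.
  by move=> k; exact: integrable_Kquan1.
rewrite -[in RHS](card_ord q) -prodr_const.
by under eq_bigr do rewrite Rintegral_Kquan1 //.
Qed.

Lemma dint_ext p (s : 'I_p -> nat) (f g : ('I_p -> nat) -> R) :
  (forall t : 'I_p -> nat, (forall k, t k < s k)%N -> f t = g t) ->
  dint s f = dint s g.
Proof. by move=> fg; congr (_ * _); apply: eq_bigr => t _; apply: fg => k. Qed.

Lemma dint_cst p (s : 'I_p -> nat) (c : R) : (forall k, 0 < s k)%N ->
  dint s (fun _ => c) = c.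
Proof.
move=> s_gt0; rewrite /dint sumr_const card_dep_ffun foldrE big_map big_enum /=.
rewrite -mulr_natr natr_prod; under [X in _ * (_ * X)]eq_bigr do rewrite card_ord.
rewrite mulrCA mulVf ?mulr1 //; apply/prodf_neq0 => k _.
by rewrite pnatr_eq0 -lt0n.
Qed.

Lemma dint_Kqual p (s : 'I_p -> nat) (a : 'I_p -> nat) (c : R) :
  (forall k, a k < s k)%N ->
  dint s (fun z => Kqual R a z * c) =
  \prod_(k < p) ((5 * s k + 1)%:R / (4 * s k)%:R) * c.
Proof.
move=> a_lt; rewrite /dint /Kqual -big_distrl /= mulrA; congr (_ * _).
rewrite (sum_dffun_prod (fun k (j : 'I_(s k)) => if a k == j then 3 / 2 else 5 / 4 : R)).
rewrite -prodfV -big_split /=; apply: eq_bigr => k _.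
rewrite sum_ord_if_eq //; case: (s k) (a_lt k) => // m _ /=.
by rewrite -mulr_natr -addn1 !(natrD, natrM); field; rewrite natr1 pnatr_eq0.
Qed.

Lemma KqualC p : commutative (@Kqual R p).
Proof. by move=> t z; apply: eq_bigr => k _; rewrite eq_sym. Qed.

Lemma KquanC q : commutative (@Kquan R q).
Proof. by move=> t z; apply: eq_bigr => k _; exact: Kquan1C. Qed.

Lemma KernC p q (t1 z1 : 'I_p -> nat) (t2 z2 : 'I_q -> R) :
  Kern t1 t2 z1 z2 = Kern z1 z2 t1 t2.
Proof. by rewrite /Kern KqualC KquanC. Qed.

Lemma chiint_ext p q (s : 'I_p -> nat) (f g : ('I_p -> nat) -> ('I_q -> R) -> R) :
  (forall t u, (forall k, t k < s k)%N -> (forall k, 0 <= u k <= 1) ->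
     f t u = g t u) ->
  chiint s f = chiint s g.
Proof. by move=> fg; apply: dint_ext => t t_lt; apply: cint_ext => u; exact: fg. Qed.

Lemma chiint_cst p q (s : 'I_p -> nat) (c : R) : (forall k, 0 < s k)%N ->
  chiint s (fun _ (_ : 'I_q -> R) => c) = c.
Proof. by move=> s_gt0; rewrite /chiint cint_cst dint_cst. Qed.

Lemma chiint_Kern p q (s : 'I_p -> nat) (t1 : 'I_p -> nat) (t2 : 'I_q -> R) :
  (forall k, t1 k < s k)%N -> (forall k, 0 <= t2 k <= 1) ->
  chiint s (fun z1 z2 => Kern t1 t2 z1 z2) =
  \prod_(k < p) ((5 * s k + 1)%:R / (4 * s k)%:R) * (4 / 3) ^+ q.
Proof.
move=> t1_lt t2_01; rewrite /chiint -(dint_Kqual _ t1_lt).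
by apply: dint_ext => z1 _; exact: cint_Kquan.
Qed.

Lemma Kqual_coinc n p (D1 : 'I_n -> 'I_p -> nat) (i j : 'I_n) :
  Kqual R (D1 i) (D1 j) = (5 / 4) ^+ p * (6 / 5) ^+ coinc D1 i j.
Proof.
rewrite /Kqual /coinc.
transitivity (\prod_(k < p) (5 / 4 * (if D1 i k == D1 j k then 6 / 5 else 1)) : R).
  by apply: eq_bigr => k _; case: ifP => _; field.
rewrite big_split /= prodr_const card_ord -big_mkcond /= prodr_const.
by congr (_ * _ ^+ _); apply: eq_card => k; apply/idP/idP; rewrite in_setE.
Qed.

Lemma transf_itv (s x : nat) : (x < s)%N -> 0 <= transf R s x <= 1.
Proof.
move=> xs; rewrite /transf divr_ge0 //= ler_pdivrMr ?mul1r ?ler_nat ?ltr0n; lia.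
Qed.

End KernelMeans.

Theorem theorem1 (R : realType) (n p q : nat) (s1 : 'I_p -> nat) (s2 : 'I_q -> nat)
  (D1 : 'I_n -> 'I_p -> nat) (D2 : 'I_n -> 'I_q -> nat) :
  (0 < n)%N -> utype s1 D1 -> utype s2 D2 ->
  let x2 := fun i k => transf R (s2 k) (D2 i k) in
  QQD2 R s1 s2 D1 D2 =
    - (\prod_(k < p) ((5 * s1 k + 1)%:R / (4 * s1 k)%:R)) * (4 / 3) ^+ q
    + 1 / (n%:R ^+ 2) * \sum_(i < n) \sum_(j < n)
        ((5 / 4) ^+ p * (6 / 5) ^+ coinc D1 i j *
         \prod_(k < q) (3 / 2 - `|x2 i k - x2 j k| + `|x2 i k - x2 j k| ^+ 2)).
Proof.
move=> n_gt0 uD1 uD2 x2.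
pose C : R := \prod_(k < p) ((5 * s1 k + 1)%:R / (4 * s1 k)%:R) * (4 / 3) ^+ q.
have D1_lt i k : (D1 i k < s1 k)%N by exact: (uD1 k).1.
have s1_gt0 k : (0 < s1 k)%N.
  exact: leq_ltn_trans (leq0n _) (D1_lt (Ordinal n_gt0) k).
have x2_01 i k : 0 <= x2 i k <= 1 by exact/transf_itv/(uD2 k).1.
have mean_mean :
    chiint s1 (fun t1 (t2 : 'I_q -> R) => chiint s1 (fun z1 z2 => Kern t1 t2 z1 z2)) = C.
  transitivity (chiint s1 (fun _ (_ : 'I_q -> R) => C)); last exact: chiint_cst.
  by apply: chiint_ext => t1 t2; exact: chiint_Kern.
have mean_row i : chiint s1 (fun t1 t2 => Kern t1 t2 (D1 i) (x2 i)) = C.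
  rewrite /C -(chiint_Kern (D1_lt i) (x2_01 i)).
  by apply: chiint_ext => t1 t2 _ _; exact: KernC.
rewrite /QQD2 -/x2 mean_mean (eq_bigr _ (fun i _ => mean_row i)) sumr_const card_ord.
under eq_bigr => i _ do under eq_bigr => j _ do rewrite /Kern Kqual_coinc.
have n_neq0 : n%:R != 0 :> R by rewrite pnatr_eq0 -lt0n.
by rewrite /C -mulr_natr; field.
Qed.
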